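(* Let $n\ge4$, and let $x_1,\dots,x_{2n}$ and $z_2,z_4,\dots,z_{2n}$ be the elements of the boundary algebra $e_b\Lambda_{Q_F(n)}e_b$ defined below. Then for all $k\in[1,n]$, with indices modulo $2n$, $$\text{(I)}\quad z_{2k}z_{2k-2}=x_{2k+1}x_{2k+2}\cdots x_{2k+2(n-2)},\qquad \text{(II)}\quad x_{2k+1}x_{2k+2}z_{2k+2}=z_{2k}x_{2k-1}x_{2k}$$ hold in $e_b\Lambda_{Q_F(n)}e_b$.
   Context: Paths are composed from left to right. The dimer algebra of a dimer model with boundary $Q$ is $\Lambda_Q=\mathbb{C}Q/\langle\partial W\rangle$, where $\partial W$ consists of the relations $p_1\cdots p_k=q_1\cdots q_l$, one for each internal arrow $\alpha$ lying on the anticlockwise face boundary $\alpha p_1\cdots p_k$ and the clockwise face boundary $\alpha q_1\cdots q_l$; $e_b$ is the sum of the trivial paths at the boundary vertices. GL$_2$-dimer quiver: for a triangulation $T$ of a convex $n$-gon $P$ with vertices $v_1,\dots,v_n$ anticlockwise, subdivide each triangle of $T$ by the midlines into $4$ small triangles; put a black node at the midpoint of each half-side of each triangle and in each downward (middle) small triangle, and a white node in each of the three upward small triangles; join nodes of different colour lying in the same small triangle or in small triangles sharing a side. The quiver has a vertex for each component of the complement of this graph in $P$ and an arrow across each edge, oriented with the white endpoint on its left; white nodes give anticlockwise faces, black nodes of degree $\ge 2$ clockwise faces; 2-cycles of internal arrows are removed via the potential (reduced quiver). $Q_F(n)$: the reduced quiver for the fan triangulation with diagonals $v_1v_{k+2}$,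 $k=1,\dots,n-3$. It has boundary vertices $1,\dots,2n$ (anticlockwise, $2j-1$ being the component at corner $v_j$), internal vertices $i_1,\dots,i_{n-3}$, and arrows $x_k:k-1\to k$ ($k\in[1,2n]$, mod $2n$), $y_4:4\to2$, $y_{2n}:2n\to 2n-2$, $\alpha_0:2\to i_1$, $\alpha_k:i_k\to i_{k+1}$ ($1\le k<n-3$), $\alpha_{n-3}:i_{n-3}\to 2n$, $\beta_{k-1}:i_k\to 2k+2$ and $\gamma_k:2k+4\to i_k$ ($1\le k\le n-3$). The paths $z_{2k}:2k\to 2k-2$ are $z_{2k}:=\gamma_{k-2}\beta_{k-3}$ for $k=3,\dots,n-1$, $z_4:=y_4$, $z_2:=\alpha_0\alpha_1\cdots\alpha_{n-3}$, $z_{2n}:=y_{2n}$. *)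

From HB Require Import structures.
From mathcomp Require Import all_boot all_order all_algebra.
Set Implicit Arguments. Unset Strict Implicit. Unset Printing Implicit Defensive.
Import GRing.Theory.

(* Vertices: inl k = boundary vertex k (1 <= k <= 2n),                 *)
(*           inr k = internal vertex i_k (1 <= k <= n-3).              *)
(* Arrows:  X k = x_k, Y4 = y_4, Y2n = y_{2n}, Al k = alpha_k,         *)
(*          Be k = beta_k, Ga k = gamma_k.                             *)

Definition vertex := (nat + nat)%type.

Inductive arrow : Type :=
| X of nat | Y4 | Y2n | Al of nat | Be of nat | Ga of nat.

Lemma arrow_eq_dec : comparable arrow.
Proof. move=> a b; rewrite /decidable; decide equality; exact: eq_comparable. Qed.
HB.instance Definition _ := comparableMixin arrow_eq_dec.

Definition arrow_valid (n : nat) (a : arrow) : bool :=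
  match a with
  | X k => (1 <= k <= 2 * n)%N
  | Y4 | Y2n => true
  | Al k => (k <= n - 3)%N
  | Be k => (k <= n - 4)%N          (* beta_{k-1}, k in [1, n-3] *)
  | Ga k => (1 <= k <= n - 3)%N
  end.

Definition src (n : nat) (a : arrow) : vertex :=
  match a with
  | X k => inl (if k == 1%N then 2 * n else k.-1)%N
  | Y4 => inl 4%N
  | Y2n => inl (2 * n)%N
  | Al 0 => inl 2%N
  | Al k => inr k
  | Be k => inr k.+1
  | Ga k => inl (2 * k + 4)%N
  end.

Definition tgt (n : nat) (a : arrow) : vertex :=
  match a with
  | X k => inl k
  | Y4 => inl 2%N
  | Y2n => inl (2 * n - 2)%N
  | Al k => if k == (n - 3)%N then inl (2 * n)%N else inr k.+1
  | Be k => inl (2 * k + 4)%N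
  | Ga k => inr k
  end.

Fixpoint composable (n : nat) (w : seq arrow) : bool :=
  match w with
  | a :: ((b :: _) as w') => (tgt n a == src n b) && composable n w'
  | _ => true
  end.

(* non-trivial paths of Q_F(n) (paths composed left to right) *)
Definition is_path (n : nat) (w : seq arrow) : bool :=
  [&& w != [::], all (arrow_valid n) w & composable n w].

Definition internal_arrow (n : nat) (a : arrow) : bool :=
  arrow_valid n a && (if a is X _ then false else true).

(* The faces of Q_F(n) (as cyclic paths). *)
Definition face_corner1 (n : nat) : seq arrow :=
  X 1 :: X 2 :: map Al (iota 0 (n - 2)).
Definition face_corner (n j : nat) : seq arrow :=
  [:: X (2 * j - 1); X (2 * j); Ga (j - 2); Be (j - 3)].
Definition face_tri (k : nat) : seq arrow := [:: Al k; Be k; Ga k].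

Definition faces (n : nat) : seq (seq arrow) :=
  [:: face_corner1 n; [:: X 3; X 4; Y4]]
  ++ [seq face_corner n j | j <- iota 3 (n - 3)]
  ++ [:: [:: X (2 * n - 1); X (2 * n); Y2n]; [:: Al 0; Be 0; Y4]]
  ++ [seq face_tri k | k <- iota 1 (n - 4)]
  ++ [:: [:: Al (n - 3); Y2n; Ga (n - 3)]].

(* the relations of dW: for each internal arrow a lying on the two faces
   a p and a q, the relation p = q *)
Definition is_rel (n : nat) (p q : seq arrow) : Prop :=
  exists (a : arrow) (f g : seq arrow) (i j : nat),
    [/\ internal_arrow n a, f \in faces n, g \in faces n & f != g] /\
    rot i f = a :: p /\ rot j g = a :: q.

(* A generator  c * l (p - q) r  of the two-sided ideal <dW> in F Q *)
Record ideal_term (F : fieldType) := IdealTerm {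
  it_coef : F; it_l : seq arrow; it_p : seq arrow; it_q : seq arrow; it_r : seq arrow }.

(* Equality of two (non-trivial) paths u, v in Lambda = F Q / <dW>:
   u - v is an F-linear combination of elements l (p - q) r, l, r paths
   (non-composable products being 0 in F Q); compared coefficientwise on
   the basis of (non-trivial) paths of Q. *)
Definition lam_eq (F : fieldType) (n : nat) (u v : seq arrow) : Prop :=
  exists L : seq (ideal_term F),
    (forall i, (i < size L)%N -> let t := nth (IdealTerm 0%R [::] [::] [::] [::]) L i in is_rel n (it_p t) (it_q t)) /\
    forall w, is_path n w ->
      (((u == w)%:R - (v == w)%:R : F)
      = \sum_(t <- L) it_coef t *
          ((it_l t ++ it_p t ++ it_r t == w)%:R - (it_l t ++ it_q t ++ it_r t == w)%:R))%R.

(* indices modulo 2n, represented in [1, 2n] *)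
Definition modidx (n m : nat) : nat := ((m + 2 * n - 1) %% (2 * n)).+1.

Definition xm (n m : nat) : arrow := X (modidx n m).

Definition xs (n s len : nat) : seq arrow := [seq xm n (s + i) | i <- iota 0 len].

Definition zpath (n m : nat) : seq arrow :=
  let k := (modidx n m)./2 in
  if k == 1%N then map Al (iota 0 (n - 2))
  else if k == 2%N then [:: Y4]
  else if k == n then [:: Y2n]
  else [:: Ga (k - 2); Be (k - 3)].

(* Every identity is derived in the congruence on paths generated by the
   relations of dW, which is sound for [lam_eq].  Writing gamma'_0 = y_4 and
   beta'_(n-3) = y_(2n), the internal part of Q_F(n) is the fan of triangles
   alpha_j beta'_j gamma'_j (0 <= j <= n-3).  The relations at the beta's and
   at y_(2n) slide gamma'_j to the end of the alpha-chain, turning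
   gamma'_j alpha_j ... alpha_(n-3) into x_(2j+5) ... x_(2n); symmetrically the
   relations at the gamma's and at y_4 turn alpha_0 ... alpha_j beta'_j into
   x_3 ... x_(2j+4).  Relation (I) is one relation at alpha followed by these
   two telescopes, and (II) is a single relation on each side. *)

From HB Require Import structures.
From mathcomp Require Import all_boot all_order all_algebra.
From mathcomp Require Import zify.
Set Implicit Arguments. Unset Strict Implicit. Unset Printing Implicit Defensive.
Import GRing.Theory.

Inductive dW_eq (n : nat) : seq arrow -> seq arrow -> Prop :=
| dW_rel l p q r : is_rel n p q -> dW_eq n (l ++ p ++ r) (l ++ q ++ r)
| dW_refl u : dW_eq n u u
| dW_sym u v : dW_eq n u v -> dW_eq n v u
| dW_trans u v w : dW_eq n u v -> dW_eq n v w -> dW_eq n u w.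

Section Soundness.
Variables (F : fieldType) (n : nat).

Definition oppt (t : ideal_term F) :=
  IdealTerm (- it_coef t) (it_l t) (it_p t) (it_q t) (it_r t).

Lemma lam_eq_of_dW_eq u v : dW_eq n u v -> lam_eq F n u v.
Proof.
elim=> {u v}.
- move=> l p q r H; exists [:: IdealTerm 1 l p q r]; split; first by case.
  by move=> w _; rewrite big_seq1 /= mul1r.
- by move=> u; exists [::]; split=> // w _; rewrite big_nil subrr.
- move=> u v _ [L [HL HS]]; exists (map oppt L); split.
    move=> i; rewrite size_map => Hi.
    by rewrite (nth_map (IdealTerm 0 [::] [::] [::] [::])) //; apply: HL.
  move=> w Hw; rewrite big_map.
  under eq_bigr do rewrite /= mulNr.
  by rewrite sumrN -HS // opprB.
- move=> u v w _ [L1 [H1 S1]] _ [L2 [H2 S2]]; exists (L1 ++ L2); split.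
    move=> i; rewrite size_cat nth_cat => Hi.
    by case: ifP => Hi1; [apply: H1 | apply: H2; lia].
  by move=> x Hx; rewrite big_cat -S1 // -S2 // /= addrA subrK.
Qed.

End Soundness.

Section Congruence.
Variable n : nat.

Lemma dW_eq_cat l r u v : dW_eq n u v -> dW_eq n (l ++ u ++ r) (l ++ v ++ r).
Proof.
elim=> {u v} [l0 p q r0 H | u | u v _ | u v w _ H1 _ H2].
- by have := dW_rel (l ++ l0) (r0 ++ r) H; rewrite !catA.
- exact: dW_refl.
- exact: dW_sym.
- exact: dW_trans H2.
Qed.

Lemma dW_eq_of_rel p q : is_rel n p q -> dW_eq n p q.
Proof. by move=> H; have := dW_rel [::] [::] H; rewrite /= !cats0. Qed.

Lemma dW_eq_of_eq u v : u = v -> dW_eq n u v.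
Proof. by move=> ->; apply: dW_refl. Qed.

Lemma dW_eq_ctx l r u v w1 w2 :
  w1 = l ++ u ++ r -> dW_eq n u v -> dW_eq n (l ++ v ++ r) w2 -> dW_eq n w1 w2.
Proof. by move=> -> H1; apply: dW_trans; apply: dW_eq_cat. Qed.

End Congruence.

Definition gam (j : nat) : arrow := if j == 0 then Y4 else Ga j.
Definition bet (n j : nat) : arrow := if j == n - 3 then Y2n else Be j.
Definition alphas (a b : nat) : seq arrow := map Al (iota a b).
Definition xseq (a b : nat) : seq arrow := map X (iota a b).

Lemma gam_Ga j : j != 0 -> gam j = Ga j.
Proof. by rewrite /gam => /negbTE ->. Qed.

Lemma bet_Be n j : j != n - 3 -> bet n j = Be j.
Proof. by rewrite /bet => /negbTE ->. Qed.

Lemma alphasS a b : alphas a b.+1 = alphas a b ++ [:: Al (a + b)].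
Proof. by rewrite /alphas -addn1 iotaD map_cat. Qed.

Lemma xseqD a b c : xseq a (b + c) = xseq a b ++ xseq (a + b) c.
Proof. by rewrite /xseq iotaD map_cat. Qed.

Lemma cons_neq (a b : arrow) s t : a != b -> a :: s != b :: t.
Proof. by move=> H; apply/eqP => -[] E; rewrite E eqxx in H. Qed.

Section Fan.
Variable n : nat.
Hypothesis hn : 4 <= n.

Lemma fan_face_in_faces j : j <= n - 3 -> [:: Al j; bet n j; gam j] \in faces n.
Proof.
move=> hj; rewrite /faces !mem_cat.
have [->|j0] := eqVneq j 0.
  rewrite bet_Be; last by apply/eqP; lia.
  by rewrite /gam /= !inE eqxx !orbT.
have [->|jn] := eqVneq j (n - 3).
  rewrite gam_Ga; last by apply/eqP; lia.
  by rewrite /bet eqxx !inE eqxx !orbT.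
rewrite gam_Ga // bet_Be //.
suff -> : face_tri j \in [seq face_tri k | k <- iota 1 (n - 4)] by rewrite !orbT.
by apply: map_f; rewrite mem_iota; lia.
Qed.

Lemma face_corner_in_faces j : 3 <= j <= n - 1 -> face_corner n j \in faces n.
Proof.
move=> hj; rewrite /faces !mem_cat.
suff -> : face_corner n j \in [seq face_corner n k | k <- iota 3 (n - 3)].
  by rewrite !orbT.
by apply: map_f; rewrite mem_iota; lia.
Qed.

Lemma dW_alpha j : j <= n - 3 ->
  dW_eq n (alphas j.+1 (n - 3 - j) ++ [:: X 1; X 2] ++ alphas 0 j) [:: bet n j; gam j].
Proof.
move=> hj; apply: dW_eq_of_rel.
exists (Al j), (face_corner1 n), [:: Al j; bet n j; gam j], (j + 2), 0.
split; [split|split] => //.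
- by rewrite /internal_arrow /=; lia.
- by rewrite /faces mem_cat inE eqxx.
- exact: fan_face_in_faces.
- by apply: cons_neq; apply/eqP; discriminate.
- rewrite /face_corner1 (_ : n - 2 = j + (n - 3 - j).+1); last by lia.
  rewrite iotaD map_cat /= add0n -cat_cons.
  rewrite (_ : j + 2 = size (X 1 :: X 2 :: map Al (iota 0 j))); last first.
    by rewrite /= size_map size_iota; lia.
  by rewrite -cat_cons rot_size_cat.
Qed.

Lemma dW_beta j : j <= n - 4 ->
  dW_eq n [:: gam j; Al j] [:: X (2 * j + 5); X (2 * j + 6); gam j.+1].
Proof.
move=> hj; apply: dW_eq_of_rel.
have hbet : bet n j = Be j by apply: bet_Be; apply/eqP; lia.
exists (Be j), [:: Al j; bet n j; gam j], (face_corner n (j + 3)), 1, 3.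
split; [split|split].
- by rewrite /internal_arrow /=; lia.
- by apply: fan_face_in_faces; lia.
- by apply: face_corner_in_faces; lia.
- by apply: cons_neq; apply/eqP; discriminate.
- by rewrite hbet.
- rewrite /face_corner gam_Ga //.
  by rewrite /=; congr [:: Be _; X _; X _; Ga _]; lia.
Qed.

Lemma dW_gamma j : 1 <= j <= n - 3 ->
  dW_eq n [:: bet n j.-1; X (2 * j + 3); X (2 * j + 4)] [:: Al j; bet n j].
Proof.
move=> hj; apply: dW_eq_of_rel.
have hgam : gam j = Ga j by apply: gam_Ga; apply/eqP; lia.
exists (gam j), (face_corner n (j + 2)), [:: Al j; bet n j; gam j], 2, 2.
split; [split|split].
- by rewrite hgam /internal_arrow /=; lia.
- by apply: face_corner_in_faces; lia.
- by apply: fan_face_in_faces; lia.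
- by apply: cons_neq; apply/eqP; discriminate.
- rewrite /face_corner hgam bet_Be /=; last by apply/eqP; lia.
  by congr [:: Ga _; Be _; X _; X _]; lia.
- by [].
Qed.

Lemma dW_y4 : dW_eq n [:: X 3; X 4] [:: Al 0; bet n 0].
Proof.
apply: dW_eq_of_rel; exists Y4, [:: X 3; X 4; Y4], [:: Al 0; Be 0; Y4], 2, 2.
rewrite bet_Be; last by apply/eqP; lia.
split; [split|split] => //.
- by rewrite /faces !mem_cat !inE eqxx !orbT.
- by rewrite /faces !mem_cat !inE eqxx !orbT.
- by apply: cons_neq; apply/eqP; discriminate.
Qed.

Lemma dW_y2n : dW_eq n [:: X (2 * n - 1); X (2 * n)] [:: gam (n - 3); Al (n - 3)].
Proof.
apply: dW_eq_of_rel.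
exists Y2n, [:: X (2 * n - 1); X (2 * n); Y2n], [:: Al (n - 3); Y2n; Ga (n - 3)], 2, 1.
rewrite gam_Ga; last by apply/eqP; lia.
split; [split|split] => //.
- by rewrite /faces !mem_cat !inE eqxx !orbT.
- have := fan_face_in_faces (leqnn (n - 3)).
  by rewrite /bet eqxx gam_Ga //; apply/eqP; lia.
- by apply: cons_neq; apply/eqP; discriminate.
Qed.

Lemma dW_gam_alphas j : j <= n - 3 ->
  dW_eq n (gam j :: alphas j (n - 2 - j)) (xseq (2 * j + 5) (2 * n - 2 * j - 4)).
Proof.
move=> hj; have [m hm] : exists m, j + m = n - 3 by exists (n - 3 - j); lia.
elim: m j hj hm => [|m IH] j hj hm.
  rewrite addn0 in hm; subst j.
  rewrite (_ : n - 2 - (n - 3) = 1); last by lia.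
  rewrite (_ : 2 * n - 2 * (n - 3) - 4 = 2); last by lia.
  rewrite /alphas /xseq /= (_ : 2 * (n - 3) + 5 = 2 * n - 1); last by lia.
  by rewrite (_ : (2 * n - 1).+1 = 2 * n); [apply: dW_sym; apply: dW_y2n | lia].
have hsplit : n - 2 - j = (n - 2 - j.+1).+1 by lia.
apply: (@dW_eq_ctx n [::] (alphas j.+1 (n - 2 - j.+1)) [:: gam j; Al j]).
- by rewrite hsplit.
- by apply: dW_beta; lia.
apply: (@dW_eq_ctx n [:: X (2 * j + 5); X (2 * j + 6)] [::]
          (gam j.+1 :: alphas j.+1 (n - 2 - j.+1))); first by rewrite cats0.
  by apply: IH; lia.
apply: dW_eq_of_eq; rewrite cats0.
rewrite (_ : 2 * n - 2 * j - 4 = 2 + (2 * n - 2 * j.+1 - 4)); last by lia.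
rewrite xseqD (_ : 2 * j + 5 + 2 = 2 * j.+1 + 5); last by lia.
by rewrite /xseq /= (_ : (2 * j + 5).+1 = 2 * j + 6) //; lia.
Qed.

Lemma dW_alphas_bet j : j <= n - 3 ->
  dW_eq n (alphas 0 j.+1 ++ [:: bet n j]) (xseq 3 (2 * j + 2)).
Proof.
elim: j => [|j IH] hj; first by apply: dW_sym; apply: dW_y4.
apply: (@dW_eq_ctx n (alphas 0 j.+1) [::] [:: Al j.+1; bet n j.+1]).
- by rewrite alphasS -catA.
- apply: dW_sym; have := @dW_gamma j.+1.
  rewrite (_ : 2 * j.+1 + 3 = 2 * j + 5); last by lia.
  by rewrite (_ : 2 * j.+1 + 4 = 2 * j + 6); [apply; lia | lia].
apply: (@dW_eq_ctx n [::] [:: X (2 * j + 5); X (2 * j + 6)] (alphas 0 j.+1 ++ [:: bet n j])).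
- by rewrite /= -catA.
- by apply: IH; lia.
apply: dW_eq_of_eq; rewrite (_ : 2 * j.+1 + 2 = (2 * j + 2) + 2); last by lia.
rewrite [in RHS]xseqD (_ : 3 + (2 * j + 2) = 2 * j + 5); last by lia.
by rewrite /xseq /= (_ : (2 * j + 5).+1 = 2 * j + 6) //; lia.
Qed.

Lemma modidx_id m : 1 <= m <= 2 * n -> modidx n m = m.
Proof.
move=> hm; rewrite /modidx (_ : m + 2 * n - 1 = (m - 1) + 2 * n); last by lia.
by rewrite modnDr modn_small; lia.
Qed.

Lemma modidx_wrap m : 1 <= m <= 2 * n -> modidx n (m + 2 * n) = m.
Proof.
move=> hm; rewrite /modidx (_ : m + 2 * n + 2 * n - 1 = (m - 1) + 2 * n + 2 * n); last by lia.
by rewrite !modnDr modn_small; lia.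
Qed.

Lemma modidx0 : modidx n 0 = 2 * n.
Proof. by rewrite /modidx add0n modn_small; lia. Qed.

Lemma xm_id m : 1 <= m <= 2 * n -> xm n m = X m.
Proof. by move=> hm; rewrite /xm modidx_id. Qed.

Lemma xm_wrap m : 1 <= m <= 2 * n -> xm n (m + 2 * n) = X m.
Proof. by move=> hm; rewrite /xm modidx_wrap. Qed.

Lemma xs_shift s len d : 1 <= s -> s + len <= 2 * n + 1 ->
  d = 0 \/ d = 2 * n -> xs n (s + d) len = xseq s len.
Proof.
move=> h1 h2 hd; rewrite /xs /xseq -[in RHS](addn0 s) iotaDl -map_comp.
apply/eq_in_map => i; rewrite mem_iota => hi /=.
case: hd => ->; first by rewrite addn0 xm_id //; lia.
by rewrite (_ : s + 2 * n + i = (s + i) + 2 * n) ?xm_wrap //; lia.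
Qed.

Lemma xs_id s len : 1 <= s -> s + len <= 2 * n + 1 -> xs n s len = xseq s len.
Proof. by move=> h1 h2; rewrite -[s]addn0 xs_shift ?addn0 //; left. Qed.

Lemma xs_wrap s len : 1 <= s -> s + len <= 2 * n + 1 -> xs n (s + 2 * n) len = xseq s len.
Proof. by move=> h1 h2; rewrite xs_shift //; right. Qed.

Lemma xsD s a b : xs n s (a + b) = xs n s a ++ xs n (s + a) b.
Proof.
rewrite /xs iotaD map_cat add0n -[in iota a b](addn0 a) iotaDl -map_comp.
by congr (_ ++ _); apply: eq_map => i /=; rewrite addnA.
Qed.

(* [zfan k] is z_(2k) for 1 <= k <= n, without the reduction modulo 2n. *)
Definition zfan (k : nat) : seq arrow :=
  if k == 1 then alphas 0 (n - 2) else if k == 2 then [:: gam 0]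
  else if k == n then [:: bet n (n - 3)] else [:: gam (k - 2); bet n (k - 3)].

Lemma zpath_zfan k : 1 <= k <= n -> zpath n (2 * k) = zfan k.
Proof.
move=> hk; rewrite /zpath modidx_id; last by lia.
rewrite mul2n doubleK /zfan.
case: eqP => [//|h1]; case: eqP => [//|h2]; case: eqP => [_|h3].
  by rewrite /bet eqxx.
by rewrite gam_Ga ?bet_Be //; apply/eqP; lia.
Qed.

Lemma zpath_pred k : 1 <= k <= n ->
  zpath n (2 * k - 2) = zfan (if k == 1 then n else k.-1).
Proof.
move=> hk; case: eqP => [->|k1].
  by rewrite -zpath_zfan /zpath ?modidx0 ?modidx_id //; lia.
by rewrite -zpath_zfan; [congr zpath; lia | lia].
Qed.

Lemma zpath_succ k : 1 <= k <= n ->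
  zpath n (2 * k + 2) = zfan (if k == n then 1 else k.+1).
Proof.
move=> hk; case: eqP => [->|kn].
  rewrite -zpath_zfan /zpath; last by lia.
  rewrite (_ : 2 * n + 2 = 2 + 2 * n); last by lia.
  by rewrite modidx_wrap ?modidx_id //; lia.
by rewrite -zpath_zfan; [congr zpath; lia | lia].
Qed.

Lemma zfan1 : zfan 1 = alphas 0 (n - 2).
Proof. by []. Qed.

Lemma zfan2 : zfan 2 = [:: gam 0].
Proof. by []. Qed.

Lemma zfann : zfan n = [:: bet n (n - 3)].
Proof.
rewrite /zfan ifN; last by apply/eqP; lia.
by rewrite ifN ?eqxx //; apply/eqP; lia.
Qed.

Lemma zfan_mid k : 3 <= k <= n - 1 -> zfan k = [:: gam (k - 2); bet n (k - 3)].
Proof. by move=> hk; rewrite /zfan !ifN //; apply/eqP; lia. Qed.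

Lemma relationI_1 : dW_eq n (zfan 1 ++ zfan n) (xs n 3 (2 * (n - 2))).
Proof.
rewrite zfan1 zfann (_ : n - 2 = (n - 3).+1); last by lia.
apply: dW_trans (dW_alphas_bet (leqnn _)) _; apply: dW_eq_of_eq.
by rewrite xs_id; [congr xseq | |]; lia.
Qed.

Lemma relationI_2 : dW_eq n (zfan 2 ++ zfan 1) (xs n 5 (2 * (n - 2))).
Proof.
have := dW_gam_alphas (leq0n (n - 3)); rewrite subn0 => H.
apply: dW_trans H _; apply: dW_eq_of_eq.
by rewrite xs_id; [congr xseq | |]; lia.
Qed.

Lemma relationI_mid j : j <= n - 4 ->
  dW_eq n (zfan (j + 3) ++ zfan (j + 2)) (xs n (2 * (j + 3) + 1) (2 * (n - 2))).
Proof.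
move=> hj; rewrite zfan_mid; last by lia.
rewrite (_ : j + 3 - 2 = j.+1); last by lia.
rewrite (_ : j + 3 - 3 = j); last by lia.
set Bo := if j is i.+1 then [:: bet n i] else [::].
have -> : zfan (j + 2) = gam j :: Bo.
  rewrite /Bo; case: j hj {Bo} => [|i] hi //.
  by rewrite zfan_mid; [congr [:: gam _, bet n _ & _]; lia | lia].
have hBo : dW_eq n (alphas 0 j ++ Bo) (xseq 3 (2 * j)).
  rewrite /Bo; case: j hj {Bo} => [|i] hi; first exact: dW_refl.
  by rewrite (_ : 2 * i.+1 = 2 * i + 2); [apply: dW_alphas_bet | ]; lia.
apply: (@dW_eq_ctx n [:: gam j.+1] Bo [:: bet n j; gam j]) => //.
  by apply: dW_sym; apply: dW_alpha; lia.
apply: (@dW_eq_ctx n [::] ([:: X 1; X 2] ++ alphas 0 j ++ Bo)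
          (gam j.+1 :: alphas j.+1 (n - 2 - j.+1))).
- by rewrite /= -!catA (_ : n - 3 - j = n - 2 - j.+1) //; lia.
- by apply: dW_gam_alphas; lia.
apply: (@dW_eq_ctx n (xseq (2 * j.+1 + 5) (2 * n - 2 * j.+1 - 4) ++ [:: X 1; X 2]) [::]
          _ _ _ _ _ hBo); first by rewrite cats0 -!catA.
apply: dW_eq_of_eq.
rewrite (_ : 2 * (n - 2) = (2 * n - 2 * j.+1 - 4) + (2 + 2 * j)); last by lia.
rewrite xsD xs_id; try lia.
rewrite (_ : 2 * (j + 3) + 1 + (2 * n - 2 * j.+1 - 4) = 1 + 2 * n); last by lia.
rewrite xs_wrap ?xseqD ?cats0 -?catA; try lia.
by congr (xseq _ _ ++ _); lia.
Qed.

Lemma relationI_n : dW_eq n (zfan n ++ zfan (n - 1)) (xs n (2 * n + 1) (2 * (n - 2))).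
Proof.
rewrite zfann zfan_mid; last by lia.
rewrite (_ : n - 1 - 2 = n - 3); last by lia.
rewrite (_ : n - 1 - 3 = n - 4); last by lia.
apply: (@dW_eq_ctx n [::] [:: bet n (n - 4)] [:: bet n (n - 3); gam (n - 3)]) => //.
  by apply: dW_sym; apply: dW_alpha.
rewrite subnn /= (_ : n - 3 = (n - 4).+1); last by lia.
apply: (@dW_eq_ctx n [:: X 1; X 2] [::] (alphas 0 (n - 4).+1 ++ [:: bet n (n - 4)])).
- by rewrite cats0.
- by apply: dW_alphas_bet; lia.
apply: dW_eq_of_eq; rewrite cats0 (_ : 2 * n + 1 = 1 + 2 * n); last by lia.
rewrite xs_wrap; try lia.
rewrite (_ : 2 * (n - 2) = 2 + (2 * (n - 4) + 2)); last by lia.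
by rewrite [in RHS]xseqD.
Qed.

Lemma relationI k : 1 <= k <= n ->
  dW_eq n (zfan k ++ zfan (if k == 1 then n else k.-1)) (xs n (2 * k + 1) (2 * (n - 2))).
Proof.
move=> hk; case: eqP => [->|k1]; first exact: relationI_1.
have [->|k2] := eqVneq k 2; first exact: relationI_2.
have [->|kn] := eqVneq k n; first by rewrite -subn1; exact: relationI_n.
have [j kj] : exists j, k = j + 3 by exists (k - 3); lia.
subst k.
rewrite (_ : (j + 3).-1 = j + 2); last by lia.
by apply: relationI_mid; lia.
Qed.

Lemma relationII_1 : dW_eq n ([:: X 3; X 4] ++ zfan 2) (zfan 1 ++ [:: X 1; X 2]).
Proof.
rewrite zfan1 zfan2.
apply: (@dW_eq_ctx n [::] [:: gam 0] [:: X 3; X 4]) => //; first exact: dW_y4.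
apply: (@dW_eq_ctx n [:: Al 0] [::] [:: bet n 0; gam 0]) => //.
  by apply: dW_sym; apply: dW_alpha; lia.
by apply: dW_eq_of_eq; rewrite (_ : n - 2 = (n - 3).+1) /= ?subn0 ?cats0 //; lia.
Qed.

Lemma relationII_2 : dW_eq n ([:: X 5; X 6] ++ zfan 3) (zfan 2 ++ [:: X 3; X 4]).
Proof.
rewrite zfan2 zfan_mid; last by lia.
apply: (@dW_eq_ctx n [::] [:: bet n 0] [:: X (2 * 0 + 5); X (2 * 0 + 6); gam 1]) => //.
  by apply: dW_sym; apply: dW_beta; lia.
apply: (@dW_eq_ctx n [:: gam 0] [::] [:: Al 0; bet n 0]) => //.
  by apply: dW_sym; apply: dW_y4.
exact: dW_refl.
Qed.

Lemma relationII_mid k : 3 <= k <= n - 1 ->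
  dW_eq n ([:: X (2 * k + 1); X (2 * k + 2)] ++ zfan k.+1)
          (zfan k ++ [:: X (2 * k - 1); X (2 * k)]).
Proof.
move=> hk; have [j kj] : exists j, k = j.+2 by exists (k - 2); lia.
subst k; apply: dW_sym; rewrite [zfan j.+2]zfan_mid; last by lia.
have -> : j.+2 - 2 = j by lia.
have -> : j.+2 - 3 = j.-1 by lia.
have -> : 2 * j.+2 - 1 = 2 * j + 3 by lia.
have -> : 2 * j.+2 = 2 * j + 4 by lia.
apply: (@dW_eq_ctx n [:: gam j] [::] [:: bet n j.-1; X (2 * j + 3); X (2 * j + 4)]) => //.
  by apply: dW_gamma; lia.
have [jn|jn] := eqVneq j (n - 3).
  apply: (@dW_eq_ctx n [::] [:: bet n j] [:: gam j; Al j] [:: X (2 * j + 5); X (2 * j + 6)]) => //.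
    apply: dW_sym; have := dW_y2n; rewrite -jn.
    rewrite (_ : 2 * n - 1 = 2 * j + 5); last by lia.
    by rewrite (_ : 2 * n = 2 * j + 6); last by lia.
  rewrite (_ : j.+3 = n) ?zfann ?jn; last by lia.
  by apply: dW_eq_of_eq; congr [:: X _; X _; _]; lia.
apply: (@dW_eq_ctx n [::] [:: bet n j] [:: gam j; Al j]
          [:: X (2 * j + 5); X (2 * j + 6); gam j.+1]) => //.
  by apply: dW_beta; lia.
rewrite zfan_mid; last by lia.
by apply: dW_eq_of_eq; congr [:: X _, X _, gam _ & [:: bet n _]]; lia.
Qed.

Lemma relationII_n : dW_eq n ([:: X 1; X 2] ++ zfan 1) (zfan n ++ [:: X (2 * n - 1); X (2 * n)]).
Proof.
apply: dW_sym; rewrite zfann zfan1.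
apply: (@dW_eq_ctx n [:: bet n (n - 3)] [::] [:: X (2 * n - 1); X (2 * n)]).
- by rewrite cats0.
- exact: dW_y2n.
apply: (@dW_eq_ctx n [::] [:: Al (n - 3)] [:: bet n (n - 3); gam (n - 3)]) => //.
  by apply: dW_sym; apply: dW_alpha.
apply: dW_eq_of_eq; rewrite subnn (_ : n - 2 = (n - 3).+1); last by lia.
by rewrite alphasS add0n -catA.
Qed.

Lemma relationII k : 1 <= k <= n ->
  dW_eq n ([:: xm n (2 * k + 1); xm n (2 * k + 2)] ++ zfan (if k == n then 1 else k.+1))
          (zfan k ++ [:: xm n (2 * k - 1); xm n (2 * k)]).
Proof.
move=> hk; rewrite [xm n (2 * k - 1)]xm_id ?[xm n (2 * k)]xm_id; try lia.
case: eqP => [->|kn].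
  rewrite (_ : 2 * n + 1 = 1 + 2 * n); last by lia.
  rewrite (_ : 2 * n + 2 = 2 + 2 * n); last by lia.
  by rewrite !xm_wrap //; [exact: relationII_n | lia | lia].
rewrite !xm_id; try lia.
have [->|k1] := eqVneq k 1; first exact: relationII_1.
have [->|k2] := eqVneq k 2; first exact: relationII_2.
by apply: relationII_mid; lia.
Qed.

End Fan.

Theorem proposition3p5 (F : fieldType) (n : nat) (hn : (4 <= n)%N) :
  forall k : nat, (1 <= k <= n)%N ->
    lam_eq F n (zpath n (2 * k) ++ zpath n (2 * k - 2)) (xs n (2 * k + 1) (2 * (n - 2)))
    /\ lam_eq F n ([:: xm n (2 * k + 1); xm n (2 * k + 2)] ++ zpath n (2 * k + 2))
                  (zpath n (2 * k) ++ [:: xm n (2 * k - 1); xm n (2 * k)]).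
Proof.
move=> k hk; rewrite zpath_zfan // zpath_pred // zpath_succ //.
by split; apply: lam_eq_of_dW_eq; [apply: relationI | apply: relationII].
Qed.
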